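(* Let $m\in\mathbb{N}$, $a,b>0$, let $f=(1,f_1,\ldots,f_{p-1})^T$ be a vector of known regression functions on $\mathbb{R}^k$, let $\beta\in\mathbb{R}^p$ be the unknown parameter, and let $x_1,\ldots,x_m\in\mathbb{R}^k$. Let $\Theta\sim\gamma(a,b)$ (density $\frac{b^a}{\Gamma(a)}\theta^{a-1}e^{-b\theta}$, $\theta>0$) and assume that conditionally on $\Theta=\theta$ the random variables $Y_1,\ldots,Y_m$ are independent with $Y_j$ Poisson distributed with mean $\theta\exp(f(x_j)^T\beta)$. Then the Fisher information matrix of $Y=(Y_1,\ldots,Y_m)$ for $\beta$ is $$I(\beta)=\frac{a}{b}\left(I_{Po}(\beta)-\frac{I_{Po}(\beta)e_1e_1^TI_{Po}(\beta)}{e_1^TI_{Po}(\beta)e_1+b}\right),$$ where $I_{Po}(\beta)=\sum_{j=1}^m\exp\bigl(f(x_j)^T\beta\bigr)f(x_j)f(x_j)^T$ and $e_1$ is the first standard unit vector of $\mathbb{R}^p$.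
   Context: The shape parameter $a$ and rate parameter $b$ are known; only $\beta$ is the parameter of interest. $I_{Po}(\beta)$ is the Fisher information matrix of the Poisson model without random effect. *)

From Stdlib Require Import Reals List Arith.
From Coquelicot Require Import Coquelicot.
Open Scope R_scope.

Definition Rk (k : nat) : Type := {i : nat | (i < k)%nat} -> R.

Definition fsum (n : nat) (F : nat -> R) : R :=
  fold_right Rplus 0 (map F (seq 0 n)).
Definition fprod (n : nat) (F : nat -> R) : R :=
  fold_right Rmult 1 (map F (seq 0 n)).

Definition dotp (p : nat) (u v : nat -> R) : R := fsum p (fun i => u i * v i).

Definition int0inf (g : R -> R) : R :=
  RInt_gen g (at_right 0) (Rbar_locally p_infty).

Definition Gamma_fn (a : R) : R := int0inf (fun t => Rpower t (a - 1) * exp (- t)).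

Definition gamma_dens (a b th : R) : R :=
  Rpower b a / Gamma_fn a * Rpower th (a - 1) * exp (- b * th).

Definition pois_pmf (mu : R) (y : nat) : R := exp (- mu) * mu ^ y / INR (fact y).

(* Marginal pmf of Y = (Y_1,...,Y_m) (y given as list, y_j = nth (j-1) y 0):
   int_0^oo gamma_dens(theta) prod_j Pois(y_j ; theta exp(f(x_j)^T beta)) dtheta. *)
Definition mixed_pmf (k p m : nat) (a b : R) (f : Rk k -> nat -> R)
    (x : nat -> Rk k) (beta : nat -> R) (y : list nat) : R :=
  int0inf (fun th => gamma_dens a b th *
    fprod m (fun j => pois_pmf (th * exp (dotp p (f (x j)) beta)) (nth j y 0%nat))).

Definition shift (i : nat) (t : R) (beta : nat -> R) : nat -> R :=
  fun l => if Nat.eqb l i then beta l + t else beta l.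

Definition score (k p m : nat) (a b : R) (f : Rk k -> nat -> R)
    (x : nat -> Rk k) (beta : nat -> R) (i : nat) (y : list nat) : R :=
  Derive (fun t => ln (mixed_pmf k p m a b f x (shift i t beta) y)) 0.

(* Iterated sum over y in N^m (lists of length m): is_msum m F l means the
   iterated series sum_{y_1} ... sum_{y_m} F (y_1 :: ... :: y_m :: nil)
   converges (each inner series converging) with value l. *)
Fixpoint is_msum (m : nat) (F : list nat -> R) (l : R) : Prop :=
  match m with
  | O => F nil = l
  | S m' => exists g : nat -> R,
      (forall n, is_msum m' (fun ys => F (n :: ys)) (g n)) /\ is_series g l
  end.

Definition I_Po (k p m : nat) (f : Rk k -> nat -> R) (x : nat -> Rk k)
    (beta : nat -> R) (i l : nat) : R :=
  fsum m (fun j => exp (dotp p (f (x j)) beta) * f (x j) i * f (x j) l).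

From Stdlib Require Import Reals List Arith Lra Lia Classical.
From Coquelicot Require Import Coquelicot.
Open Scope R_scope.

(* Integrating out [Θ ~ γ(a, b)] turns the conditionally independent Poisson counts into
   the negative multinomial law, whose pmf is explicit.  Conditioning on the first count,
   which is negative binomial (it sums to 1 by the binomial series
   [Σ (a)_n q^n / n! = (1 - q)^(-a)]), leaves a negative multinomial law with shape [a + k]
   and rate [b + μ_1]; by induction on [m] this gives the moments
   [E Y_j = a μ_j / b] and [E Y_j Y_l = δ_jl a μ_j / b + a (a + 1) μ_j μ_l / b^2],
   where [μ_j = exp (f(x_j)^T β)].  The score is affine in [Y]:
   [∂_i log P(Y) = Σ_j Y_j (f_i(x_j) - c_i) - a c_i] with
   [c_i = Σ_j μ_j f_i(x_j) / (b + Σ_j μ_j)], so the Fisher information is a quadratic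
   expression in these moments.  Because of the intercept [f_0 = 1] we have
   [(I_Po e_1)_i = Σ_j μ_j f_i(x_j)] and [e_1^T I_Po e_1 = Σ_j μ_j], and the expression
   collapses to the stated rank-one correction of [(a / b) I_Po]. *)

(** * Finite sums and products *)

Lemma fsum_S n F : fsum (S n) F = fsum n F + F n.
Proof.
  unfold fsum. rewrite seq_S, map_app, fold_right_app. simpl.
  induction (map F (seq 0 n)); simpl; lra.
Qed.

Lemma fprod_S n F : fprod (S n) F = fprod n F * F n.
Proof.
  unfold fprod. rewrite seq_S, map_app, fold_right_app. simpl.
  induction (map F (seq 0 n)) as [|? ? IH]; simpl; [lra | rewrite IH; ring].
Qed.

Lemma fsum_Sl n F : fsum (S n) F = F 0%nat + fsum n (fun j => F (S j)).
Proof. unfold fsum. simpl. rewrite <- seq_shift, map_map. reflexivity. Qed.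

Lemma fprod_Sl n F : fprod (S n) F = F 0%nat * fprod n (fun j => F (S j)).
Proof. unfold fprod. simpl. rewrite <- seq_shift, map_map. reflexivity. Qed.

Lemma fsum_ext n F G : (forall j, (j < n)%nat -> F j = G j) -> fsum n F = fsum n G.
Proof. induction n; intros H; [reflexivity|]. rewrite !fsum_S, IHn, H; auto. Qed.

Lemma fprod_ext n F G : (forall j, (j < n)%nat -> F j = G j) -> fprod n F = fprod n G.
Proof. induction n; intros H; [reflexivity|]. rewrite !fprod_S, IHn, H; auto. Qed.

Lemma fsum_plus n F G : fsum n (fun j => F j + G j) = fsum n F + fsum n G.
Proof. induction n; [unfold fsum; simpl; ring|]. rewrite !fsum_S, IHn. ring. Qed.

Lemma fsum_scal n c F : fsum n (fun j => c * F j) = c * fsum n F.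
Proof. induction n; [unfold fsum; simpl; ring|]. rewrite !fsum_S, IHn. ring. Qed.

Lemma fsum_nonneg n F : (forall j, 0 <= F j) -> 0 <= fsum n F.
Proof. intros H. induction n; [unfold fsum; simpl; lra|]. rewrite fsum_S. specialize (H n). lra. Qed.

Lemma fsum_delta n j F : (j < n)%nat ->
  fsum n (fun l => if Nat.eqb l j then F l else 0) = F j.
Proof.
  induction n; intros H; [lia|]. rewrite fsum_S.
  destruct (Nat.eq_dec j n) as [->|Hne].
  - rewrite Nat.eqb_refl, (fsum_ext _ _ (fun l => 0 * F l)), fsum_scal; [ring|].
    intros l Hl. destruct (Nat.eqb_spec l n); [lia | ring].
  - rewrite IHn by lia. destruct (Nat.eqb_spec n j); [lia | ring].
Qed.

Lemma fsum_mult n n' F G :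
  fsum n F * fsum n' G = fsum n (fun q => fsum n' (fun r => F q * G r)).
Proof.
  rewrite (Rmult_comm (fsum n F)), <- fsum_scal. apply fsum_ext. intros q _.
  rewrite Rmult_comm, <- fsum_scal. apply fsum_ext. intros; ring.
Qed.

Lemma fsum_centered n w u c :
  fsum n (fun q => w q * (u q - c)) = fsum n (fun q => w q * u q) - c * fsum n w.
Proof. induction n; [unfold fsum; simpl; ring|]. rewrite !fsum_S, IHn. ring. Qed.

Lemma fsum_centered2 n w u v c c' :
  fsum n (fun q => w q * (u q - c) * (v q - c')) =
  fsum n (fun q => w q * u q * v q) - c * fsum n (fun q => w q * v q)
  - c' * fsum n (fun q => w q * u q) + c * c' * fsum n w.
Proof. induction n; [unfold fsum; simpl; ring|]. rewrite !fsum_S, IHn. ring. Qed.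

Lemma fprod_mult n F G : fprod n (fun j => F j * G j) = fprod n F * fprod n G.
Proof. induction n; [unfold fprod; simpl; ring|]. rewrite !fprod_S, IHn. ring. Qed.

Lemma fprod_exp n F : fprod n (fun j => exp (F j)) = exp (fsum n F).
Proof.
  induction n; [unfold fprod, fsum; simpl; symmetry; apply exp_0|].
  rewrite fprod_S, fsum_S, IHn, exp_plus. reflexivity.
Qed.

Lemma fprod_Rpower n x F : 0 < x -> fprod n (fun j => Rpower x (F j)) = Rpower x (fsum n F).
Proof.
  intros Hx. induction n; [unfold fprod, fsum; simpl; symmetry; apply Rpower_O; auto|].
  rewrite fprod_S, fsum_S, IHn, Rpower_plus. reflexivity.
Qed.

Lemma fprod_pos n F : (forall j, (j < n)%nat -> 0 < F j) -> 0 < fprod n F.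
Proof.
  induction n; intros H; [unfold fprod; simpl; lra|].
  rewrite fprod_S. apply Rmult_lt_0_compat; auto.
Qed.

Lemma ln_fprod n F : (forall j, (j < n)%nat -> 0 < F j) ->
  ln (fprod n F) = fsum n (fun j => ln (F j)).
Proof.
  induction n; intros H; [apply ln_1|].
  rewrite fprod_S, fsum_S, ln_mult, IHn; auto. apply fprod_pos; auto.
Qed.

(** * The binomial series *)

Fixpoint rising (a : R) (n : nat) : R :=
  match n with O => 1 | S n' => rising a n' * (a + INR n') end.

Lemma rising_pos a n : 0 < a -> 0 < rising a n.
Proof.
  intros Ha. induction n; simpl; [lra|].
  apply Rmult_lt_0_compat; auto. pose proof (pos_INR n); lra.
Qed.

Definition binom_coef (a : R) (n : nat) : R := rising a n / INR (fact n).

Lemma binom_coef_pos a n : 0 < a -> 0 < binom_coef a n.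
Proof. intros Ha. apply Rdiv_lt_0_compat; [apply rising_pos; auto | apply INR_fact_lt_0]. Qed.

Lemma binom_coef_S a n :
  binom_coef a (S n) = binom_coef a n * (a + INR n) / INR (S n).
Proof.
  unfold binom_coef. simpl rising. change (fact (S n)) with (S n * fact n)%nat.
  rewrite mult_INR. pose proof (INR_fact_lt_0 n). pose proof (lt_0_INR (S n) ltac:(lia)).
  field. lra.
Qed.

Lemma CV_radius_binom_coef a : 0 < a -> CV_radius (binom_coef a) = 1.
Proof.
  intros Ha. rewrite (CV_radius_finite_DAlembert _ 1); [rewrite Rinv_1; reflexivity | | lra |].
  - intros n. apply Rgt_not_eq, binom_coef_pos; auto.
  - apply (is_lim_seq_ext (fun n => 1 + (a - 1) * / INR (S n))).
    { intros n. pose proof (binom_coef_pos a n Ha). pose proof (pos_INR n).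
      rewrite binom_coef_S, Rabs_pos_eq.
      - rewrite S_INR. field. lra.
      - apply Rdiv_le_0_compat; [|lra].
        apply Rdiv_le_0_compat; [nra | apply lt_0_INR; lia]. }
    replace (Finite 1) with (Finite (1 + (a - 1) * 0)) by (f_equal; ring).
    apply is_lim_seq_plus'; [apply is_lim_seq_const|].
    replace (Finite ((a - 1) * 0)) with (Rbar_mult (a - 1) (Rbar_inv p_infty))
      by reflexivity.
    apply is_lim_seq_scal_l, is_lim_seq_inv; [|discriminate].
    apply (is_lim_seq_incr_1 INR), is_lim_seq_INR.
Qed.

Lemma binom_coef_inside a z : 0 < a -> -1 < z < 1 ->
  Rbar_lt (Rabs z) (CV_radius (binom_coef a)).
Proof. intros Ha Hz. rewrite CV_radius_binom_coef by auto. simpl. apply Rabs_def1; lra. Qed.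

Lemma PSeries_binom_coef_ode a z : 0 < a -> -1 < z < 1 ->
  (1 - z) * PSeries (PS_derive (binom_coef a)) z = a * PSeries (binom_coef a) z.
Proof.
  intros Ha Hz. pose proof (binom_coef_inside a z Ha Hz) as Hd.
  assert (Hd' : Rbar_lt (Rabs z) (CV_radius (PS_derive (binom_coef a))))
    by (rewrite CV_radius_derive; auto).
  rewrite Rmult_minus_distr_r, Rmult_1_l, <- PSeries_incr_1, <- PSeries_minus,
    <- PSeries_scal; [| apply CV_radius_inside; auto
                      | apply ex_pseries_incr_1, CV_radius_inside; auto].
  apply PSeries_ext. intros [|n]; unfold PS_minus, PS_scal, PS_incr_1, PS_derive.
  - change (INR 1 * binom_coef a 1 + - 0 = a * binom_coef a 0).
    unfold binom_coef; simpl. field.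
  - change (INR (S (S n)) * binom_coef a (S (S n)) + - (INR (S n) * binom_coef a (S n))
            = a * binom_coef a (S n)).
    rewrite binom_coef_S, !S_INR. pose proof (pos_INR n). field. lra.
Qed.

Lemma is_derive_val_eq (F : R -> R) x l l' : is_derive F x l -> l = l' -> is_derive F x l'.
Proof. intros H <-. exact H. Qed.

(* [S(z) (1 - z)^a] has derivative [0] by the differential equation, so it keeps its
   value [1] at [z = 0]. *)
Lemma PSeries_binom_coef a q : 0 < a -> 0 <= q < 1 ->
  PSeries (binom_coef a) q = Rpower (1 - q) (- a).
Proof.
  intros Ha Hq.
  set (g := fun z => PSeries (binom_coef a) z * exp (a * ln (1 - z))).
  assert (Hg' : forall z, -1 < z < 1 -> is_derive g z 0).
  { intros z Hz. pose proof (PSeries_binom_coef_ode a z Ha Hz) as Hode.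
    eapply is_derive_val_eq; [apply (is_derive_mult (PSeries (binom_coef a)))|].
    - apply is_derive_PSeries, binom_coef_inside; auto.
    - auto_derive; [lra | reflexivity].
    - intros; apply Rmult_comm.
    - unfold plus, mult; simpl. unfold mult; simpl.
      replace (PSeries (PS_derive (binom_coef a)) z)
        with (a * PSeries (binom_coef a) z / (1 - z)) by (rewrite <- Hode; field; lra).
      replace (1 + - z) with (1 - z) by ring. field. lra. }
  assert (Hg : g q = g 0).
  { destruct (MVT_gen g 0 q (fun _ => 0)) as [c [_ Hc]]; [| |lra].
    - intros z Hz. apply Hg'. rewrite Rmin_left, Rmax_right in Hz; lra.
    - intros z Hz. rewrite Rmin_left, Rmax_right in Hz by lra.
      apply continuity_pt_filterlim, (@ex_derive_continuous R_AbsRing R_NormedModule).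
      eexists. apply Hg'. lra. }
  unfold g in Hg. rewrite PSeries_0, Rminus_0_r, ln_1, Rmult_0_r, exp_0 in Hg.
  replace (binom_coef a 0) with 1 in Hg by (unfold binom_coef; simpl; field).
  rewrite Rpower_Ropp. unfold Rpower. pose proof (exp_pos (a * ln (1 - q))).
  apply (Rmult_eq_reg_r (exp (a * ln (1 - q)))); [rewrite Hg; field|]; lra.
Qed.

Lemma is_series_binomial a q : 0 < a -> 0 <= q < 1 ->
  is_series (fun n => binom_coef a n * q ^ n) (Rpower (1 - q) (- a)).
Proof.
  intros Ha Hq. rewrite <- PSeries_binom_coef by auto.
  eapply is_series_ext; [|apply PSeries_correct, CV_radius_inside, binom_coef_inside; lra].
  intros n. rewrite pow_n_pow. apply Rmult_comm.
Qed.

(** * Improper integrals on the half line and the Gamma function *)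

Lemma exp_le x y : x <= y -> exp x <= exp y.
Proof. intros [H|<-]; [left; apply exp_increasing; auto | lra]. Qed.

Lemma eventually_Rmin_pos :
  filter_prod (at_right 0) (Rbar_locally p_infty)
    (fun ab : R * R => 0 < Rmin (fst ab) (snd ab)).
Proof.
  apply (Filter_prod _ _ _ (fun x => 0 < x) (fun y => 0 < y)).
  - unfold at_right, within. apply filter_forall. auto.
  - exists 0. auto.
  - intros u v Hu Hv. apply Rmin_glb_lt; auto.
Qed.

Lemma eventually_on_pos_le (P : R -> Prop) : (forall x, 0 < x -> P x) ->
  filter_prod (at_right 0) (Rbar_locally p_infty)
    (fun ab : R * R => forall x, Rmin (fst ab) (snd ab) <= x <= Rmax (fst ab) (snd ab) -> P x).
Proof.
  intros HP. eapply filter_imp; [|exact eventually_Rmin_pos].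
  intros ab Hab x Hx. apply HP. lra.
Qed.

Lemma eventually_on_pos_lt (P : R -> Prop) : (forall x, 0 < x -> P x) ->
  filter_prod (at_right 0) (Rbar_locally p_infty)
    (fun ab : R * R => forall x, Rmin (fst ab) (snd ab) < x < Rmax (fst ab) (snd ab) -> P x).
Proof.
  intros HP. eapply filter_imp; [|exact (eventually_on_pos_le P HP)].
  intros ab Hab x Hx. apply Hab. lra.
Qed.

Lemma int0inf_unique (g : R -> R) l :
  is_RInt_gen g (at_right 0) (Rbar_locally p_infty) l -> int0inf g = l.
Proof. intros H. exact (is_RInt_gen_unique _ _ H). Qed.

Section NonnegIntegrand.

Variable f : R -> R.
Hypothesis f_cont : forall x, 0 < x -> continuous f x.
Hypothesis f_nonneg : forall x, 0 < x -> 0 <= f x.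

Lemma ex_RInt_pos x y : 0 < x -> 0 < y -> ex_RInt f x y.
Proof.
  intros Hx Hy. apply (@ex_RInt_continuous R_CompleteNormedModule).
  intros z Hz. apply f_cont. pose proof (Rmin_glb_lt x y 0 Hx Hy). lra.
Qed.

Lemma RInt_nonneg_mono x x0 y0 y : 0 < x -> x <= x0 -> x0 <= y0 -> y0 <= y ->
  RInt f x0 y0 <= RInt f x y.
Proof.
  intros Hx H1 H2 H3.
  rewrite <- (RInt_Chasles f x x0 y), <- (RInt_Chasles f x0 y0 y)
    by (apply ex_RInt_pos; lra).
  assert (0 <= RInt f x x0)
    by (apply RInt_ge_0; [lra | apply ex_RInt_pos; lra | intros; apply f_nonneg; lra]).
  assert (0 <= RInt f y0 y)
    by (apply RInt_ge_0; [lra | apply ex_RInt_pos; lra | intros; apply f_nonneg; lra]).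
  change (RInt f x0 y0 <= RInt f x x0 + (RInt f x0 y0 + RInt f y0 y)). lra.
Qed.

(* [l] is the supremum of the integrals over compact subintervals. *)
Lemma is_RInt_gen_nonneg_bounded K :
  (forall x y, 0 < x <= y -> RInt f x y <= K) ->
  exists l, is_RInt_gen f (at_right 0) (Rbar_locally p_infty) l /\
            forall x y, 0 < x <= y -> RInt f x y <= l.
Proof.
  intros HK.
  set (E := fun v => exists x y, 0 < x <= y /\ v = RInt f x y).
  destruct (completeness E) as [l [Hub Hlub]].
  { exists K. intros v [x [y [Hxy ->]]]. auto. }
  { exists (RInt f 1 1), 1, 1. split; [lra | reflexivity]. }
  exists l. split; [|intros x y Hxy; apply Hub; exists x, y; auto].
  unfold is_RInt_gen, filterlimi, filter_le, filtermapi. intros P [eps HP].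
  destruct (classic (exists v, E v /\ l - eps < v))
    as [[v [[x0 [y0 [Hxy0 ->]]] Hv]] | Hn].
  2:{ exfalso. assert (l <= l - eps); [|pose proof (cond_pos eps); lra].
      apply Hlub. intros v Ev. apply Rnot_lt_le. intros Hlt. apply Hn. eauto. }
  apply (Filter_prod _ _ _ (fun x => 0 < x < x0) (fun y => y0 < y)).
  - exists (mkposreal x0 (proj1 Hxy0)). intros y Hy Hy0. split; auto.
    change (Rabs (y - 0) < x0) in Hy. rewrite Rminus_0_r, Rabs_pos_eq in Hy; lra.
  - exists y0. auto.
  - intros x y Hx Hy. exists (RInt f x y). split.
    + apply (@RInt_correct R_CompleteNormedModule), ex_RInt_pos; lra.
    + apply HP. change (Rabs (RInt f x y - l) < eps).
      assert (RInt f x y <= l) by (apply Hub; exists x, y; split; [lra | reflexivity]).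
      assert (RInt f x0 y0 <= RInt f x y) by (apply RInt_nonneg_mono; lra).
      apply Rabs_def1; lra.
Qed.

End NonnegIntegrand.

Lemma is_RInt_gen_scale (g : R -> R) L B : 0 < B ->
  is_RInt_gen g (at_right 0) (Rbar_locally p_infty) L ->
  is_RInt_gen (fun t => B * g (B * t)) (at_right 0) (Rbar_locally p_infty) L.
Proof.
  unfold is_RInt_gen, filterlimi, filter_le, filtermapi.
  intros HB H P HP. destruct (H P HP) as [Q R' [eps HQ] [M HR] HQR].
  apply (Filter_prod _ _ _ (fun x => Q (B * x)) (fun y => R' (B * y))).
  - assert (Hpos : 0 < eps / B) by (apply Rdiv_lt_0_compat; [apply cond_pos | auto]).
    exists (mkposreal _ Hpos). intros y Hy Hy0. apply HQ.
    + change (Rabs (B * y - 0) < eps). change (Rabs (y - 0) < eps / B) in Hy.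
      rewrite Rminus_0_r, Rabs_pos_eq in * by nra.
      apply (Rmult_lt_compat_l B) in Hy; auto.
      replace (B * (eps / B)) with (pos eps) in Hy by (field; lra). exact Hy.
    + apply Rmult_lt_0_compat; auto.
  - exists (M / B). intros y Hy. apply HR.
    apply (Rmult_lt_compat_l B) in Hy; auto.
    replace (B * (M / B)) with M in Hy by (field; lra). exact Hy.
  - intros x y Hx Hy. destruct (HQR _ _ Hx Hy) as [v [Hv Pv]]. exists v. split; auto.
    simpl in Hv |- *. rewrite <- (Rplus_0_r (B * x)), <- (Rplus_0_r (B * y)) in Hv.
    apply (is_RInt_ext (fun t => scal B (g (B * t + 0)))).
    + intros; rewrite Rplus_0_r; reflexivity.
    + apply (is_RInt_comp_lin g B 0 x y v Hv).
Qed.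

Definition gamma_kernel (c t : R) : R := Rpower t (c - 1) * exp (- t).

Lemma gamma_kernel_continuous c x : 0 < x -> continuous (gamma_kernel c) x.
Proof.
  intros Hx. apply (@ex_derive_continuous R_AbsRing R_NormedModule).
  unfold gamma_kernel, Rpower. auto_derive. lra.
Qed.

Lemma gamma_kernel_pos c x : 0 < gamma_kernel c x.
Proof. apply Rmult_lt_0_compat; apply exp_pos. Qed.

Lemma Rpower_le_exp_half d :
  exists K, 0 < K /\ forall t, 1 <= t -> Rpower t d <= K * exp (t / 2).
Proof.
  set (D := Rabs d + 1). assert (HD : 0 < D) by (unfold D; pose proof (Rabs_pos d); lra).
  exists (exp (D * ln (2 * D) - D)). split; [apply exp_pos|].
  intros t Ht. apply Rle_trans with (Rpower t D).
  { apply Rle_Rpower; auto. unfold D. pose proof (Rle_abs d). lra. }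
  unfold Rpower. rewrite <- exp_plus. apply exp_le.
  (* [ln u <= u - 1] at [u = t / (2 D)] *)
  assert (H1 := exp_ineq1_le (ln (t / (2 * D)))).
  rewrite exp_ln, ln_div in H1 by (try apply Rdiv_lt_0_compat; lra).
  assert (H2 : D * (1 + (ln t - ln (2 * D))) <= D * (t / (2 * D)))
    by (apply Rmult_le_compat_l; lra).
  replace (D * (t / (2 * D))) with (t / 2) in H2 by (field; lra). nra.
Qed.

Lemma RInt_gamma_kernel_0_1 c x : 0 < c -> 0 < x <= 1 ->
  RInt (gamma_kernel c) x 1 <= 1 / c.
Proof.
  intros Hc Hx.
  assert (HI : is_RInt (fun t => Rpower t (c - 1)) x 1
                 (minus (Rpower 1 c / c) (Rpower x c / c))).
  { apply (@is_RInt_derive R_CompleteNormedModule (fun t => Rpower t c / c));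
      intros t Ht; rewrite Rmin_left, Rmax_right in Ht by lra.
    - apply is_derive_Reals.
      replace (Rpower t (c - 1)) with (/ c * (c * Rpower t (c - 1))) by (field; lra).
      apply (derivable_pt_lim_ext (fun t => / c * Rpower t c)); [intros; unfold Rdiv; ring|].
      apply derivable_pt_lim_scal, derivable_pt_lim_power; lra.
    - apply (@ex_derive_continuous R_AbsRing R_NormedModule).
      exists ((c - 1) * Rpower t (c - 1 - 1)).
      apply is_derive_Reals, derivable_pt_lim_power; lra. }
  apply Rle_trans with (RInt (fun t => Rpower t (c - 1)) x 1).
  - apply RInt_le; [lra | | eexists; exact HI |].
    + apply (@ex_RInt_continuous R_CompleteNormedModule). intros z Hz.
      rewrite Rmin_left, Rmax_right in Hz by lra. apply gamma_kernel_continuous; lra.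
    + intros t Ht. unfold gamma_kernel. rewrite <- (Rmult_1_r (Rpower t (c - 1))) at 2.
      apply Rmult_le_compat_l; [left; apply exp_pos|].
      rewrite <- exp_0. apply exp_le. lra.
  - rewrite (is_RInt_unique _ _ _ _ HI). change (Rpower 1 c / c - Rpower x c / c <= 1 / c).
    unfold Rpower at 1. rewrite ln_1, Rmult_0_r, exp_0.
    assert (0 < Rpower x c) by apply exp_pos.
    assert (0 < / c) by (apply Rinv_0_lt_compat; lra). unfold Rdiv. nra.
Qed.

Lemma RInt_gamma_kernel_tail c : exists K, forall y, 1 <= y -> RInt (gamma_kernel c) 1 y <= K.
Proof.
  destruct (Rpower_le_exp_half (c - 1)) as [K [HK Hb]].
  exists (2 * K * exp (- (1) / 2)). intros y Hy.
  assert (HI : is_RInt (fun t => K * exp (- t / 2)) 1 y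
     (minus (- 2 * K * exp (- y / 2)) (- 2 * K * exp (- (1) / 2)))).
  { apply (@is_RInt_derive R_CompleteNormedModule (fun t => - 2 * K * exp (- t / 2)));
      intros t Ht.
    - auto_derive; auto. unfold Rdiv. field.
    - apply (@ex_derive_continuous R_AbsRing R_NormedModule). auto_derive; auto. }
  apply Rle_trans with (RInt (fun t => K * exp (- t / 2)) 1 y).
  - apply RInt_le; [auto | | eexists; exact HI |].
    + apply (@ex_RInt_continuous R_CompleteNormedModule). intros z Hz.
      rewrite Rmin_left, Rmax_right in Hz by lra. apply gamma_kernel_continuous; lra.
    + intros t Ht. unfold gamma_kernel.
      replace (K * exp (- t / 2)) with (K * exp (t / 2) * exp (- t))
        by (rewrite Rmult_assoc, <- exp_plus; do 2 f_equal; field).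
      apply Rmult_le_compat_r; [left; apply exp_pos | apply Hb; lra].
  - rewrite (is_RInt_unique _ _ _ _ HI).
    change (- 2 * K * exp (- y / 2) - - 2 * K * exp (- (1) / 2) <= 2 * K * exp (- (1) / 2)).
    pose proof (exp_pos (- y / 2)). nra.
Qed.

Lemma Gamma_fn_spec c : 0 < c ->
  is_RInt_gen (gamma_kernel c) (at_right 0) (Rbar_locally p_infty) (Gamma_fn c) /\
  forall x y, 0 < x <= y -> RInt (gamma_kernel c) x y <= Gamma_fn c.
Proof.
  intros Hc. destruct (RInt_gamma_kernel_tail c) as [K HK].
  assert (Hcont := gamma_kernel_continuous c).
  assert (Hnn : forall x, 0 < x -> 0 <= gamma_kernel c x)
    by (intros; left; apply gamma_kernel_pos).
  destruct (is_RInt_gen_nonneg_bounded _ Hcont Hnn (1 / c + K)) as [l [Hl Hsup]].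
  - intros x y Hxy.
    set (x' := Rmin x 1). set (y' := Rmax y 1).
    assert (Hx' : 0 < x' <= 1) by (split; [apply Rmin_glb_lt; lra | apply Rmin_r]).
    assert (Hy' : 1 <= y') by apply Rmax_r.
    assert (Hmono : RInt (gamma_kernel c) x y <= RInt (gamma_kernel c) x' y')
      by (apply RInt_nonneg_mono; auto; [lra | apply Rmin_l | lra | apply Rmax_l]).
    rewrite <- (RInt_Chasles _ x' 1 y') in Hmono by (apply ex_RInt_pos; auto; lra).
    pose proof (RInt_gamma_kernel_0_1 c x' Hc Hx'). pose proof (HK y' Hy').
    change (RInt (gamma_kernel c) x y <=
            RInt (gamma_kernel c) x' 1 + RInt (gamma_kernel c) 1 y') in Hmono.
    lra.
  - replace (Gamma_fn c) with l; [auto|].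
    symmetry. apply int0inf_unique, Hl.
Qed.

Lemma is_RInt_gen_Gamma c : 0 < c ->
  is_RInt_gen (gamma_kernel c) (at_right 0) (Rbar_locally p_infty) (Gamma_fn c).
Proof. intros Hc. apply Gamma_fn_spec, Hc. Qed.

Lemma Gamma_fn_pos c : 0 < c -> 0 < Gamma_fn c.
Proof.
  intros Hc. apply Rlt_le_trans with (RInt (gamma_kernel c) 1 2).
  - apply RInt_gt_0; [lra | intros; apply gamma_kernel_pos |].
    intros; apply gamma_kernel_continuous; lra.
  - apply Gamma_fn_spec; lra.
Qed.

Lemma is_RInt_gen_Gamma_rate c B : 0 < c -> 0 < B ->
  is_RInt_gen (fun t => Rpower t (c - 1) * exp (- (B * t)))
    (at_right 0) (Rbar_locally p_infty) (Gamma_fn c / Rpower B c).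
Proof.
  intros Hc HB.
  pose proof (is_RInt_gen_scal _ (/ Rpower B c) _
                (is_RInt_gen_scale _ _ B HB (is_RInt_gen_Gamma c Hc))) as H.
  replace (Gamma_fn c / Rpower B c) with (scal (/ Rpower B c) (Gamma_fn c))
    by (unfold scal; simpl; unfold mult; simpl; unfold Rdiv; ring).
  revert H. apply is_RInt_gen_ext, eventually_on_pos_lt. intros t Ht.
  unfold scal; simpl; unfold mult; simpl. unfold gamma_kernel.
  rewrite <- Rpower_mult_distr by auto.
  replace (Rpower B c) with (B * Rpower B (c - 1))
    by (rewrite <- (Rpower_1 B) at 1 by auto; rewrite <- Rpower_plus; f_equal; ring).
  pose proof (exp_pos ((c - 1) * ln B)). unfold Rpower in *. field. lra.
Qed.

Lemma Rpower_mul_exp_opp_lim_0 c : 0 < c ->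
  filterlim (fun t => Rpower t c * exp (- t)) (at_right 0) (locally 0).
Proof.
  intros Hc. apply filterlim_locally. intros eps.
  set (d := Rpower eps (/ c)).
  assert (Hd : 0 < d) by apply exp_pos.
  exists (mkposreal d Hd). intros t Ht Ht0.
  change (Rabs (t - 0) < d) in Ht. rewrite Rminus_0_r, Rabs_pos_eq in Ht by lra.
  change (Rabs (Rpower t c * exp (- t) - 0) < eps).
  rewrite Rminus_0_r, Rabs_pos_eq by (left; apply Rmult_lt_0_compat; apply exp_pos).
  apply Rle_lt_trans with (Rpower t c).
  { rewrite <- (Rmult_1_r (Rpower t c)) at 2.
    apply Rmult_le_compat_l; [left; apply exp_pos|].
    rewrite <- exp_0. apply exp_le. lra. }
  replace (pos eps) with (Rpower d c).
  - apply Rlt_Rpower_l; lra.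
  - unfold d. rewrite Rpower_mult, Rinv_l, Rpower_1; [reflexivity | apply cond_pos | lra].
Qed.

Lemma Rpower_mul_exp_opp_lim_infty c :
  filterlim (fun t => Rpower t c * exp (- t)) (Rbar_locally p_infty) (locally 0).
Proof.
  apply filterlim_locally. intros eps. destruct (Rpower_le_exp_half c) as [K [HK Hb]].
  exists (Rmax 1 (-2 * ln (eps / K))). intros t Ht.
  pose proof (Rle_lt_trans _ _ _ (Rmax_l _ _) Ht) as H1.
  pose proof (Rle_lt_trans _ _ _ (Rmax_r _ _) Ht) as H2.
  change (Rabs (Rpower t c * exp (- t) - 0) < eps).
  rewrite Rminus_0_r, Rabs_pos_eq by (left; apply Rmult_lt_0_compat; apply exp_pos).
  apply Rle_lt_trans with (K * exp (t / 2) * exp (- t)).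
  { apply Rmult_le_compat_r; [left; apply exp_pos | apply Hb; lra]. }
  rewrite Rmult_assoc, <- exp_plus. replace (t / 2 + - t) with (- t / 2) by field.
  assert (Heps : 0 < eps / K) by (apply Rdiv_lt_0_compat; [apply cond_pos | auto]).
  assert (exp (- t / 2) < eps / K)
    by (rewrite <- (exp_ln (eps / K)) by auto; apply exp_increasing; lra).
  apply (Rmult_lt_compat_l K) in H; auto.
  replace (K * (eps / K)) with (pos eps) in H by (field; lra). exact H.
Qed.

(* Integration by parts: [t^c e^(-t)] has derivative [c t^(c-1) e^(-t) - t^c e^(-t)] and
   vanishes at both ends of the half line. *)
Lemma Gamma_fn_S c : 0 < c -> Gamma_fn (c + 1) = c * Gamma_fn c.
Proof.
  intros Hc.
  set (F := fun t => Rpower t c * exp (- t)).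
  set (h := fun t => c * gamma_kernel c t - gamma_kernel (c + 1) t).
  assert (HD : forall t, 0 < t -> is_derive F t (h t)).
  { intros t Ht. unfold F, h, gamma_kernel.
    replace (c + 1 - 1) with c by ring.
    replace (c - 1) with (c + - (1)) by ring.
    rewrite Rpower_plus, Rpower_Ropp, Rpower_1 by auto.
    unfold Rpower. auto_derive; [auto | field; lra]. }
  assert (Hcont : forall t, 0 < t -> continuous (Derive F) t).
  { intros t Ht. apply (continuous_ext_loc _ h).
    - exists (mkposreal t Ht). intros u Hu. change (Rabs (u - t) < t) in Hu.
      symmetry. apply is_derive_unique, HD. apply Rabs_def2 in Hu. lra.
    - apply (@ex_derive_continuous R_AbsRing R_NormedModule).
      unfold h, gamma_kernel, Rpower. auto_derive. lra. }
  pose proof (is_RInt_gen_Derive F 0 0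
    (eventually_on_pos_le _ (fun t Ht => ex_intro _ _ (HD t Ht)))
    (eventually_on_pos_le _ Hcont)
    (Rpower_mul_exp_opp_lim_0 c Hc) (Rpower_mul_exp_opp_lim_infty c)) as HR.
  apply (is_RInt_gen_ext _ h) in HR;
    [|apply eventually_on_pos_lt; intros t Ht; apply is_derive_unique, HD; auto].
  pose proof (is_RInt_gen_minus _ _ _ _
    (is_RInt_gen_scal _ c _ (is_RInt_gen_Gamma c Hc))
    (is_RInt_gen_Gamma (c + 1) ltac:(lra))) as Hh.
  apply (is_RInt_gen_ext _ h) in Hh; [|apply eventually_on_pos_lt; reflexivity].
  apply int0inf_unique in HR, Hh.
  unfold minus, plus, opp, scal in Hh; simpl in Hh; unfold mult in Hh; simpl in Hh.
  lra.
Qed.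

Lemma Gamma_fn_ratio_rising a k : 0 < a -> Gamma_fn (a + INR k) / Gamma_fn a = rising a k.
Proof.
  intros Ha. pose proof (Gamma_fn_pos a Ha). induction k; simpl rising.
  - rewrite Rplus_0_r. field. lra.
  - rewrite <- IHk, S_INR, <- Rplus_assoc, Gamma_fn_S by (pose proof (pos_INR k); lra).
    field. lra.
Qed.

(** * Negative binomial and negative multinomial moments *)

Lemma is_series_Rext (u v : nat -> R) (lu lv : R) :
  (forall n, u n = v n) -> lu = lv -> is_series u lu -> is_series v lv.
Proof. intros Huv <-. apply is_series_ext, Huv. Qed.

Lemma is_series_Rplus (u v : nat -> R) (lu lv : R) :
  is_series u lu -> is_series v lv -> is_series (fun n => u n + v n) (lu + lv).
Proof. intros Hu Hv. exact (is_series_plus u v lu lv Hu Hv). Qed.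

Lemma is_series_Rdecr_1 (u : nat -> R) (l : R) :
  is_series (fun k => u (S k)) (l - u 0%nat) -> is_series u l.
Proof. intros H. exact (is_series_decr_1 u l H). Qed.

Definition negbin (a B mu : R) (k : nat) : R :=
  mu ^ k / INR (fact k) * (Gamma_fn (a + INR k) / Gamma_fn a)
  * (Rpower B a / Rpower (B + mu) (a + INR k)).

Lemma negbin_binom a B mu k : 0 < a -> 0 < B -> 0 <= mu ->
  negbin a B mu k =
  binom_coef a k * (mu / (B + mu)) ^ k * Rpower (1 - mu / (B + mu)) a.
Proof.
  intros Ha HB Hm. unfold negbin, binom_coef. rewrite Gamma_fn_ratio_rising by auto.
  replace (1 - mu / (B + mu)) with (B * / (B + mu)) by (field; lra).
  rewrite <- Rpower_mult_distr, Rpower_plus, Rpower_pow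
    by (try apply Rinv_0_lt_compat; lra).
  unfold Rpower. rewrite ln_Rinv, Ropp_mult_distr_r_reverse, exp_Ropp by lra.
  unfold Rdiv. rewrite Rpow_mult_distr, pow_inv.
  pose proof (exp_pos (a * ln (B + mu))). pose proof (pow_lt (B + mu) k ltac:(lra)).
  pose proof (INR_fact_lt_0 k). field. lra.
Qed.

Lemma is_series_negbin a B mu : 0 < a -> 0 < B -> 0 <= mu -> is_series (negbin a B mu) 1.
Proof.
  intros Ha HB Hm.
  assert (Hq : 0 <= mu / (B + mu) < 1).
  { split; [apply Rdiv_le_0_compat; lra|].
    apply (Rmult_lt_reg_r (B + mu)); [lra|]. unfold Rdiv. rewrite Rmult_assoc, Rinv_l; lra. }
  pose proof (is_series_scal_r (Rpower (1 - mu / (B + mu)) a) _ _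
                (is_series_binomial a _ Ha Hq)) as H.
  rewrite <- Rpower_plus, Rplus_opp_l, Rpower_O in H by lra.
  revert H. apply is_series_ext. intros n. rewrite negbin_binom by auto. reflexivity.
Qed.

Lemma negbin_S a B mu k : 0 < a -> 0 < B -> 0 <= mu ->
  negbin a B mu (S k) * INR (S k) = a * mu / B * negbin (a + 1) B mu k.
Proof.
  intros Ha HB Hm. unfold negbin.
  replace (a + INR (S k)) with (a + 1 + INR k) by (rewrite S_INR; ring).
  rewrite Gamma_fn_S, (Rpower_plus a 1 B), Rpower_1 by auto.
  change (fact (S k)) with (S k * fact k)%nat. rewrite mult_INR. simpl pow.
  pose proof (Gamma_fn_pos a Ha). pose proof (exp_pos ((a + 1 + INR k) * ln (B + mu))).
  pose proof (INR_fact_lt_0 k). pose proof (pos_INR k).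
  unfold Rpower in *. rewrite S_INR. field. lra.
Qed.

Lemma is_series_negbin_mean a B mu : 0 < a -> 0 < B -> 0 <= mu ->
  is_series (fun k => negbin a B mu k * INR k) (a * mu / B).
Proof.
  intros Ha HB Hm. apply is_series_Rdecr_1.
  eapply is_series_Rext;
    [| | exact (is_series_scal_r (a * mu / B) _ _ (is_series_negbin (a + 1) B mu ltac:(lra) HB Hm))].
  - intros n. rewrite negbin_S by auto. apply Rmult_comm.
  - simpl. ring.
Qed.

Lemma is_series_negbin_second a B mu : 0 < a -> 0 < B -> 0 <= mu ->
  is_series (fun k => negbin a B mu k * INR k ^ 2) (a * mu / B * ((a + 1) * mu / B + 1)).
Proof.
  intros Ha HB Hm. apply is_series_Rdecr_1.
  assert (Ha1 : 0 < a + 1) by lra.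
  eapply is_series_Rext; [| |exact (is_series_scal_r (a * mu / B) _ _ (is_series_Rplus _ _ _ _
    (is_series_negbin_mean (a + 1) B mu Ha1 HB Hm) (is_series_negbin (a + 1) B mu Ha1 HB Hm)))].
  - intros n.
    replace (negbin a B mu (S n) * INR (S n) ^ 2)
      with (negbin a B mu (S n) * INR (S n) * INR (S n)) by ring.
    rewrite negbin_S, S_INR by auto. ring.
  - simpl. ring.
Qed.

Lemma is_series_negbin_quadratic a B mu c0 c1 c2 (g : nat -> R) l :
  0 < a -> 0 < B -> 0 <= mu ->
  (forall k, g k = negbin a B mu k * (c0 + c1 * INR k + c2 * INR k ^ 2)) ->
  l = c0 + c1 * (a * mu / B) + c2 * (a * mu / B * ((a + 1) * mu / B + 1)) ->
  is_series g l.
Proof.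
  intros Ha HB Hm Hg ->.
  eapply is_series_Rext; [| |exact (is_series_Rplus _ _ _ _ (is_series_Rplus _ _ _ _
    (is_series_scal_r c0 _ _ (is_series_negbin a B mu Ha HB Hm))
    (is_series_scal_r c1 _ _ (is_series_negbin_mean a B mu Ha HB Hm)))
    (is_series_scal_r c2 _ _ (is_series_negbin_second a B mu Ha HB Hm)))].
  - intros k. rewrite Hg. ring.
  - ring.
Qed.

Lemma is_msum_ext n (F G : list nat -> R) l :
  (forall y, F y = G y) -> is_msum n F l -> is_msum n G l.
Proof.
  revert F G l. induction n; intros F G l H; simpl.
  - rewrite H. auto.
  - intros [g [Hg Hs]]. exists g. split; auto.
    intros k. apply (IHn (fun ys => F (k :: ys))); auto.
Qed.

Lemma is_msum_scal_r n (F : list nat -> R) c l :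
  is_msum n F l -> is_msum n (fun y => F y * c) (l * c).
Proof.
  revert F l. induction n; intros F l; simpl.
  - intros ->. reflexivity.
  - intros [g [Hg Hs]]. exists (fun k => g k * c). split.
    + intros k. apply (IHn (fun ys => F (k :: ys))); auto.
    + apply is_series_scal_r; auto.
Qed.

Lemma is_msum_plus n (F G : list nat -> R) l1 l2 :
  is_msum n F l1 -> is_msum n G l2 -> is_msum n (fun y => F y + G y) (l1 + l2).
Proof.
  revert F G l1 l2. induction n; intros F G l1 l2; simpl.
  - intros -> ->. reflexivity.
  - intros [g [Hg Hs]] [h [Hh Ht]]. exists (fun k => g k + h k). split.
    + intros k. apply (IHn (fun ys => F (k :: ys)) (fun ys => G (k :: ys))); auto.
    + apply is_series_Rplus; auto.
Qed.

Lemma is_msum_zero n : is_msum n (fun _ => 0) 0.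
Proof.
  induction n; simpl; [reflexivity|].
  exists (fun _ => 0). split; auto.
  eapply is_series_Rext; [| |exact (is_series_scal_r 0 _ _ (is_series_geom (1 / 2) ltac:(
    rewrite Rabs_pos_eq; lra)))]; intros; simpl; ring.
Qed.

Lemma is_msum_val_eq n (F : list nat -> R) l l' : is_msum n F l -> l = l' -> is_msum n F l'.
Proof. intros H <-. exact H. Qed.

Lemma is_msum_fsum n N (F : nat -> list nat -> R) (l : nat -> R) :
  (forall j, (j < N)%nat -> is_msum n (F j) (l j)) ->
  is_msum n (fun y => fsum N (fun j => F j y)) (fsum N l).
Proof.
  induction N; intros H.
  - apply is_msum_zero.
  - rewrite fsum_S. apply (is_msum_ext _ (fun y => fsum N (fun j => F j y) + F N y)).
    + intros y. rewrite fsum_S. reflexivity.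
    + apply is_msum_plus; auto.
Qed.

Definition ysum (n : nat) (y : list nat) : R := fsum n (fun j => INR (nth j y 0%nat)).

Lemma ysum_nonneg n y : 0 <= ysum n y.
Proof. apply fsum_nonneg. intros; apply pos_INR. Qed.

Definition negmult (n : nat) (a B : R) (mu : nat -> R) (y : list nat) : R :=
  fprod n (fun j => mu j ^ nth j y 0%nat / INR (fact (nth j y 0%nat)))
  * (Gamma_fn (a + ysum n y) / Gamma_fn a)
  * (Rpower B a / Rpower (B + fsum n mu) (a + ysum n y)).

(* The first count is negative binomial and, given it equals [k], the remaining counts are
   negative multinomial with shape [a + k] and rate [B + mu 0]. *)
Lemma negmult_cons n a B mu k y : 0 < a -> 0 < B -> 0 < mu 0%nat ->
  negmult (S n) a B mu (k :: y) =
  negbin a B (mu 0%nat) k * negmult n (a + INR k) (B + mu 0%nat) (fun j => mu (S j)) y.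
Proof.
  intros Ha HB Hm. unfold negmult, negbin, ysum. rewrite fprod_Sl, !fsum_Sl. simpl nth.
  rewrite <- !Rplus_assoc.
  pose proof (Gamma_fn_pos a Ha).
  pose proof (Gamma_fn_pos (a + INR k) ltac:(pose proof (pos_INR k); lra)).
  pose proof (INR_fact_lt_0 k). unfold Rpower.
  match goal with |- context [exp ((a + INR k) * ln (B + mu 0%nat))] =>
    pose proof (exp_pos ((a + INR k) * ln (B + mu 0%nat))) end.
  match goal with |- context [exp ((a + INR k + ?s) * ln (B + mu 0%nat + ?M))] =>
    pose proof (exp_pos ((a + INR k + s) * ln (B + mu 0%nat + M))) end.
  field. lra.
Qed.


Lemma is_msum_negmult_cons n a B mu (H : list nat -> R) (h : nat -> R) l :
  0 < a -> 0 < B -> 0 < mu 0%nat ->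
  (forall k, is_msum n
     (fun y => negmult n (a + INR k) (B + mu 0%nat) (fun j => mu (S j)) y * H (k :: y)) (h k)) ->
  is_series (fun k => negbin a B (mu 0%nat) k * h k) l ->
  is_msum (S n) (fun y => negmult (S n) a B mu y * H y) l.
Proof.
  intros Ha HB Hm Hin Hs. exists (fun k => negbin a B (mu 0%nat) k * h k). split; auto.
  intros k. eapply is_msum_ext; [|rewrite Rmult_comm; apply is_msum_scal_r, Hin].
  intros y. cbv beta. rewrite negmult_cons by auto. ring.
Qed.

Lemma is_msum_negmult n : forall a B mu, 0 < a -> 0 < B -> (forall j, 0 < mu j) ->
  is_msum n (negmult n a B mu) 1.
Proof.
  induction n; intros a B mu Ha HB Hm.
  - simpl. unfold negmult, ysum, fsum, fprod; simpl. rewrite !Rplus_0_r.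
    pose proof (Gamma_fn_pos a Ha). pose proof (exp_pos (a * ln B)). unfold Rpower. field. lra.
  - apply (is_msum_ext _ (fun y => negmult (S n) a B mu y * 1)); [intros; ring|].
    apply (is_msum_negmult_cons _ _ _ _ (fun _ => 1) (fun _ => 1)); auto.
    + intros k. apply (is_msum_ext _ (negmult n (a + INR k) (B + mu 0%nat) (fun j => mu (S j)))).
      * intros y. ring.
      * apply IHn; auto; [pose proof (pos_INR k) | pose proof (Hm 0%nat)]; lra.
    + apply (is_series_negbin_quadratic a B (mu 0%nat) 1 0 0); auto; [left; auto | intros; ring | ring].
Qed.

Lemma is_msum_negmult_mean n : forall a B mu j, 0 < a -> 0 < B -> (forall j, 0 < mu j) ->
  (j < n)%nat ->
  is_msum n (fun y => negmult n a B mu y * INR (nth j y 0%nat)) (a * mu j / B).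
Proof.
  induction n; intros a B mu j Ha HB Hm Hj; [lia|].
  assert (Hak : forall k, 0 < a + INR k) by (intros k; pose proof (pos_INR k); lra).
  assert (HB' : 0 < B + mu 0%nat) by (pose proof (Hm 0%nat); lra).
  destruct j as [|j].
  - apply (is_msum_negmult_cons _ _ _ _ _ (fun k => 1 * INR k)); auto.
    + intros k. simpl nth. apply is_msum_scal_r, is_msum_negmult; auto.
    + apply (is_series_negbin_quadratic a B (mu 0%nat) 0 1 0); auto; [left; auto | intros; ring | ring].
  - apply (is_msum_negmult_cons _ _ _ _ _
             (fun k => (a + INR k) * mu (S j) / (B + mu 0%nat))); auto.
    + intros k. simpl nth. apply (IHn _ _ (fun j => mu (S j))); auto; lia.
    + apply (is_series_negbin_quadratic a B (mu 0%nat)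
               (a * mu (S j) / (B + mu 0%nat)) (mu (S j) / (B + mu 0%nat)) 0);
        auto; [left; auto | intros; field; lra | field; lra].
Qed.

Lemma is_msum_negmult_cross n a B mu l :
  0 < a -> 0 < B -> (forall j, 0 < mu j) -> (l < n)%nat ->
  is_msum (S n)
    (fun y => negmult (S n) a B mu y * (INR (nth 0 y 0%nat) * INR (nth (S l) y 0%nat)))
    (a * (a + 1) * mu 0%nat * mu (S l) / (B * B)).
Proof.
  intros Ha HB Hm Hl.
  assert (HB' : 0 < B + mu 0%nat) by (pose proof (Hm 0%nat); lra).
  apply (is_msum_negmult_cons _ _ _ _ _
           (fun k => (a + INR k) * mu (S l) / (B + mu 0%nat) * INR k)); auto.
  - intros k. simpl nth. eapply is_msum_ext;
      [|apply is_msum_scal_r, (is_msum_negmult_mean n _ _ (fun j => mu (S j))); auto].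
    + intros y. cbv beta. ring.
    + pose proof (pos_INR k). lra.
  - apply (is_series_negbin_quadratic a B (mu 0%nat)
             0 (a * mu (S l) / (B + mu 0%nat)) (mu (S l) / (B + mu 0%nat)));
      [auto | auto | left; auto | intros; field; lra | field; lra].
Qed.

Lemma is_msum_negmult_second n : forall a B mu j l,
  0 < a -> 0 < B -> (forall j, 0 < mu j) -> (j < n)%nat -> (l < n)%nat ->
  is_msum n (fun y => negmult n a B mu y * (INR (nth j y 0%nat) * INR (nth l y 0%nat)))
    ((if Nat.eqb j l then 1 else 0) * (a * mu j / B) + a * (a + 1) * mu j * mu l / (B * B)).
Proof.
  induction n; intros a B mu j l Ha HB Hm Hj Hl; [lia|].
  assert (HB' : 0 < B + mu 0%nat) by (pose proof (Hm 0%nat); lra).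
  destruct j as [|j], l as [|l]; simpl Nat.eqb.
  - apply (is_msum_negmult_cons _ _ _ _ _ (fun k => 1 * (INR k * INR k))); auto.
    + intros k. simpl nth. apply is_msum_scal_r, is_msum_negmult; auto.
      pose proof (pos_INR k). lra.
    + apply (is_series_negbin_quadratic a B (mu 0%nat) 0 0 1);
        [auto | auto | left; auto | intros; ring | field; lra].
  - eapply is_msum_val_eq; [apply is_msum_negmult_cross; auto; lia | ring].
  - apply (is_msum_val_eq _ _ (a * (a + 1) * mu 0%nat * mu (S j) / (B * B))); [|field; lra].
    apply (is_msum_ext _ (fun y =>
      negmult (S n) a B mu y * (INR (nth 0 y 0%nat) * INR (nth (S j) y 0%nat))));
      [intros; ring | apply is_msum_negmult_cross; auto; lia].
  - set (d := if Nat.eqb j l then 1 else 0).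
    set (B' := B + mu 0%nat). set (mu' := fun j => mu (S j)).
    apply (is_msum_negmult_cons _ _ _ _ _ (fun k => d * ((a + INR k) * mu' j / B')
             + (a + INR k) * (a + INR k + 1) * mu' j * mu' l / (B' * B'))); auto.
    + intros k. simpl nth.
      apply (IHn _ _ mu'); [pose proof (pos_INR k); lra | exact HB' | intros; apply Hm | lia | lia].
    + apply (is_series_negbin_quadratic a B (mu 0%nat)
               (d * (a * mu' j / B') + a * (a + 1) * mu' j * mu' l / (B' * B'))
               (d * (mu' j / B') + (2 * a + 1) * mu' j * mu' l / (B' * B'))
               (mu' j * mu' l / (B' * B'))); [auto | auto | left; auto | |]; unfold B'.
      * intros; field; lra.
      * unfold mu'. field. lra.
Qed.

(** * The gamma-Poisson mixture, its score and its Fisher information *)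

Lemma int0inf_gamma_poisson n a B mu y : 0 < a -> 0 < B -> (forall j, 0 < mu j) ->
  int0inf (fun th => gamma_dens a B th *
    fprod n (fun j => pois_pmf (th * mu j) (nth j y 0%nat))) = negmult n a B mu y.
Proof.
  intros Ha HB Hm. apply int0inf_unique.
  set (s := ysum n y). set (M := fsum n mu).
  assert (Hs : 0 <= s) by apply ysum_nonneg.
  assert (HM : 0 <= M) by (apply fsum_nonneg; intros; left; auto).
  set (K := Rpower B a / Gamma_fn a
            * fprod n (fun j => mu j ^ nth j y 0%nat / INR (fact (nth j y 0%nat)))).
  assert (Has : 0 < a + s) by lra. assert (HBM : 0 < B + M) by lra.
  pose proof (is_RInt_gen_scal _ K _ (is_RInt_gen_Gamma_rate _ _ Has HBM)) as H.
  replace (negmult n a B mu y) with (scal K (Gamma_fn (a + s) / Rpower (B + M) (a + s))).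
  2:{ unfold negmult, K, scal; simpl; unfold mult; simpl. fold s M.
      pose proof (Gamma_fn_pos a Ha). pose proof (exp_pos ((a + s) * ln (B + M))).
      unfold Rpower in *. field. lra. }
  revert H. apply is_RInt_gen_ext, eventually_on_pos_lt. intros t Ht.
  unfold scal; simpl; unfold mult; simpl. unfold gamma_dens, pois_pmf.
  rewrite (fprod_ext n _ (fun j => exp (- t * mu j) * (Rpower t (INR (nth j y 0%nat)) *
            (mu j ^ nth j y 0%nat / INR (fact (nth j y 0%nat)))))).
  2:{ intros j _. rewrite Rpower_pow, Rpow_mult_distr by auto.
      replace (- (t * mu j)) with (- t * mu j) by ring.
      pose proof (INR_fact_lt_0 (nth j y 0%nat)). field. lra. }
  rewrite !fprod_mult, fprod_exp, fprod_Rpower, fsum_scal by auto. fold M.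
  change (fsum n (fun j => INR (nth j y 0%nat))) with s.
  unfold K. replace (a + s - 1) with ((a - 1) + s) by ring. rewrite Rpower_plus.
  replace (- ((B + M) * t)) with (- B * t + - t * M) by ring. rewrite exp_plus.
  pose proof (Gamma_fn_pos a Ha). field. lra.
Qed.

Lemma ln_negmult n a B mu y : 0 < a -> 0 < B -> (forall j, 0 < mu j) ->
  ln (negmult n a B mu y) =
  fsum n (fun l => INR (nth l y 0%nat) * ln (mu l) - ln (INR (fact (nth l y 0%nat))))
  + ln (Gamma_fn (a + ysum n y) / Gamma_fn a) + a * ln B - (a + ysum n y) * ln (B + fsum n mu).
Proof.
  intros Ha HB Hm. unfold negmult.
  pose proof (ysum_nonneg n y).
  assert (Hpois : forall j, 0 < mu j ^ nth j y 0%nat / INR (fact (nth j y 0%nat)))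
    by (intros j; apply Rdiv_lt_0_compat; [apply pow_lt; auto | apply INR_fact_lt_0]).
  assert (HG : 0 < Gamma_fn (a + ysum n y) / Gamma_fn a)
    by (apply Rdiv_lt_0_compat; apply Gamma_fn_pos; lra).
  assert (HR : 0 < Rpower B a / Rpower (B + fsum n mu) (a + ysum n y))
    by (apply Rdiv_lt_0_compat; apply exp_pos).
  pose proof (fprod_pos n _ (fun j _ => Hpois j)) as HP.
  rewrite !ln_mult, ln_fprod by (auto using Rmult_lt_0_compat).
  unfold Rpower. rewrite (ln_div (exp (a * ln B))), !ln_exp by apply exp_pos.
  rewrite (fsum_ext n _ (fun l => INR (nth l y 0%nat) * ln (mu l) - ln (INR (fact (nth l y 0%nat)))));
    [ring|].
  intros j _. rewrite ln_div, ln_pow by (auto using pow_lt, INR_fact_lt_0). reflexivity.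
Qed.

Lemma is_derive_fsum n (F : nat -> R -> R) (F' : nat -> R) t :
  (forall l, is_derive (F l) t (F' l)) ->
  is_derive (fun t => fsum n (fun l => F l t)) t (fsum n F').
Proof.
  intros H. induction n.
  - apply (is_derive_const 0).
  - apply (is_derive_ext (fun t => fsum n (fun l => F l t) + F n t));
      [intros; rewrite fsum_S; reflexivity|].
    rewrite fsum_S. apply (is_derive_plus _ _ _ _ _ IHn (H n)).
Qed.

Lemma negmult_ext n a B mu mu' y : (forall j, (j < n)%nat -> mu j = mu' j) ->
  negmult n a B mu y = negmult n a B mu' y.
Proof.
  intros H. unfold negmult. rewrite (fsum_ext n mu mu' H).
  rewrite (fprod_ext n _ (fun j => mu' j ^ nth j y 0%nat / INR (fact (nth j y 0%nat))));
    [reflexivity|].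
  intros j Hj. rewrite H; auto.
Qed.

Lemma is_derive_ln_negmult_exp n a B eta g y : 0 < a -> 0 < B ->
  is_derive (fun t => ln (negmult n a B (fun l => exp (eta l + t * g l)) y)) 0
    (fsum n (fun l => INR (nth l y 0%nat) * g l)
     - (a + ysum n y) * (fsum n (fun l => g l * exp (eta l))
                         / (B + fsum n (fun l => exp (eta l))))).
Proof.
  intros Ha HB.
  set (C := ln (Gamma_fn (a + ysum n y) / Gamma_fn a) + a * ln B).
  set (L := fun t => fsum n (fun l => INR (nth l y 0%nat) * (eta l + t * g l)
                                       - ln (INR (fact (nth l y 0%nat))))).
  set (S := fun t => fsum n (fun l => exp (eta l + t * g l))).
  apply (is_derive_ext (fun t => L t + C - (a + ysum n y) * ln (B + S t))).
  { intros t. change (@eq R (L t + C - (a + ysum n y) * ln (B + S t))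
      (ln (negmult n a B (fun l => exp (eta l + t * g l)) y))).
    rewrite ln_negmult by (auto; intros; apply exp_pos). unfold L, S, C.
    rewrite (fsum_ext n _ (fun l => INR (nth l y 0%nat) * ln (exp (eta l + t * g l))
                                     - ln (INR (fact (nth l y 0%nat)))));
      [ring | intros; rewrite ln_exp; reflexivity]. }
  assert (HS0 : S 0 = fsum n (fun l => exp (eta l)))
    by (apply fsum_ext; intros; rewrite Rmult_0_l, Rplus_0_r; reflexivity).
  assert (HBS : 0 < B + S 0).
  { rewrite HS0. pose proof (fsum_nonneg n (fun l => exp (eta l))
                               (fun l => Rlt_le _ _ (exp_pos _))). lra. }
  assert (HL : is_derive L 0 (fsum n (fun l => INR (nth l y 0%nat) * g l))).
  { apply is_derive_fsum. intros l. auto_derive; auto. ring. }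
  assert (HS : is_derive S 0 (fsum n (fun l => g l * exp (eta l)))).
  { eapply is_derive_ext; [|apply is_derive_fsum]; [reflexivity|].
    intros l. auto_derive; auto. rewrite Rmult_0_l, Rplus_0_r. ring. }
  assert (Hln : is_derive (fun s => ln (B + s)) (S 0) (/ (B + S 0)))
    by (auto_derive; [lra | ring]).
  pose proof (is_derive_comp _ S 0 _ _ Hln HS) as HlnS.
  pose proof (is_derive_minus _ _ _ _ _ (is_derive_plus _ _ _ _ _ HL (is_derive_const C 0))
                (is_derive_scal _ _ (a + ysum n y) _ HlnS)) as H.
  eapply is_derive_val_eq; [exact H|].
  unfold minus, plus, opp, zero, scal; simpl. unfold plus, mult; simpl.
  rewrite <- HS0. field. lra.
Qed.

Lemma fsum_affine_product n w u u0 v v0 :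
  (fsum n (fun q => w q * u q) + u0) * (fsum n (fun q => w q * v q) + v0) =
  fsum n (fun q => fsum n (fun r => w q * w r * (u q * v r)))
  + fsum n (fun q => w q * (u q * v0)) + fsum n (fun r => w r * (u0 * v r)) + u0 * v0.
Proof.
  transitivity (fsum n (fun q => w q * u q) * fsum n (fun q => w q * v q)
    + v0 * fsum n (fun q => w q * u q) + u0 * fsum n (fun q => w q * v q) + u0 * v0);
    [ring|].
  rewrite fsum_mult, <- !fsum_scal.
  rewrite (fsum_ext n (fun q => w q * (u q * v0)) (fun q => v0 * (w q * u q))),
    (fsum_ext n (fun r => w r * (u0 * v r)) (fun r => u0 * (w r * v r))) by (intros; ring).
  do 3 f_equal. apply fsum_ext. intros q _. apply fsum_ext. intros; ring.
Qed.
Lemma fsum_second_moment_form n a B mu u v : 0 < B ->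
  fsum n (fun q => fsum n (fun r =>
    ((if Nat.eqb q r then 1 else 0) * (a * mu q / B) + a * (a + 1) * mu q * mu r / (B * B))
    * (u q * v r)))
  = a / B * fsum n (fun q => mu q * u q * v q)
    + a * (a + 1) / (B * B) * fsum n (fun q => mu q * u q) * fsum n (fun q => mu q * v q).
Proof.
  intros HB.
  rewrite <- (fsum_scal n (a / B)), (Rmult_assoc (a * (a + 1) / (B * B))), fsum_mult,
    <- fsum_scal, <- fsum_plus.
  apply fsum_ext. intros q Hq. rewrite <- fsum_scal.
  rewrite (fsum_ext n _ (fun r => (if Nat.eqb r q then a / B * (mu q * u q * v r) else 0)
                               + a * (a + 1) / (B * B) * (mu q * u q * (mu r * v r))));
    [rewrite fsum_plus, fsum_delta by auto; reflexivity|].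
  intros r _. rewrite Nat.eqb_sym. destruct (Nat.eqb r q); field; lra.
Qed.

Lemma is_msum_negmult_affine_product n a B mu u u0 v v0 :
  0 < a -> 0 < B -> (forall j, 0 < mu j) ->
  is_msum n (fun y => negmult n a B mu y
                      * (fsum n (fun q => INR (nth q y 0%nat) * u q) + u0)
                      * (fsum n (fun q => INR (nth q y 0%nat) * v q) + v0))
    (a / B * fsum n (fun q => mu q * u q * v q)
     + a * (a + 1) / (B * B) * fsum n (fun q => mu q * u q) * fsum n (fun q => mu q * v q)
     + a / B * (v0 * fsum n (fun q => mu q * u q) + u0 * fsum n (fun q => mu q * v q))
     + u0 * v0).
Proof.
  intros Ha HB Hm.
  set (P := negmult n a B mu). set (Y := fun q (y : list nat) => INR (nth q y 0%nat)).
  apply (is_msum_ext _ (fun y =>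
     fsum n (fun q => fsum n (fun r => P y * (Y q y * Y r y) * (u q * v r)))
     + fsum n (fun q => P y * Y q y * (u q * v0))
     + fsum n (fun r => P y * Y r y * (u0 * v r))
     + P y * (u0 * v0))).
  { intros y. symmetry. rewrite Rmult_assoc, fsum_affine_product.
    rewrite !Rmult_plus_distr_l, <- !fsum_scal.
    apply f_equal2; [apply f_equal2; [apply f_equal2|]|reflexivity];
      apply fsum_ext; intros q _; unfold Y;
      [rewrite <- fsum_scal; apply fsum_ext; intros r _| |]; ring. }
  eapply is_msum_val_eq; [repeat apply is_msum_plus|].
  - apply is_msum_fsum. intros q Hq. apply is_msum_fsum. intros r Hr.
    apply is_msum_scal_r, is_msum_negmult_second; auto.
  - apply is_msum_fsum. intros q Hq. apply is_msum_scal_r, is_msum_negmult_mean; auto.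
  - apply is_msum_fsum. intros r Hr. apply is_msum_scal_r, is_msum_negmult_mean; auto.
  - apply is_msum_scal_r, is_msum_negmult; auto.
  - assert (Hlin : forall c w, fsum n (fun q => a * mu q / B * (c * w q))
                              = a / B * (c * fsum n (fun q => mu q * w q))).
    { intros c w. rewrite <- !fsum_scal. apply fsum_ext. intros; field; lra. }
    rewrite fsum_second_moment_form by auto.
    rewrite (fsum_ext n (fun q => a * mu q / B * (u q * v0)) (fun q => a * mu q / B * (v0 * u q))),
      Hlin, Hlin by (intros; ring).
    ring.
Qed.

Definition poisson_mean (k p : nat) (f : Rk k -> nat -> R) (x : nat -> Rk k)
    (beta : nat -> R) (j : nat) : R :=
  exp (dotp p (f (x j)) beta).

Definition unit_vec (j : nat) : nat -> R := fun q => if Nat.eqb q j then 1 else 0.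

Lemma dotp_shift p u j t beta :
  dotp p u (shift j t beta) = dotp p u beta + t * dotp p u (unit_vec j).
Proof.
  unfold dotp. rewrite <- fsum_scal, <- fsum_plus. apply fsum_ext. intros q _.
  unfold shift, unit_vec. destruct (Nat.eqb q j); ring.
Qed.

Lemma dotp_unit_vec p u j : (j < p)%nat -> dotp p u (unit_vec j) = u j.
Proof.
  intros Hj. rewrite <- (fsum_delta p j u Hj). apply fsum_ext. intros q _.
  unfold unit_vec. destruct (Nat.eqb q j); ring.
Qed.

Lemma mixed_pmf_negmult k p m a b f x beta y : 0 < a -> 0 < b ->
  mixed_pmf k p m a b f x beta y = negmult m a b (poisson_mean k p f x beta) y.
Proof. intros Ha Hb. apply int0inf_gamma_poisson; auto. intros; apply exp_pos. Qed.

Lemma is_derive_ln_mixed_pmf k p m a b f x beta j y : 0 < a -> 0 < b ->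
  is_derive (fun t => ln (mixed_pmf k p m a b f x (shift j t beta) y)) 0
    (fsum m (fun l => INR (nth l y 0%nat) * dotp p (f (x l)) (unit_vec j))
     - (a + ysum m y) * (fsum m (fun l => dotp p (f (x l)) (unit_vec j)
                                          * poisson_mean k p f x beta l)
                         / (b + fsum m (poisson_mean k p f x beta)))).
Proof.
  intros Ha Hb.
  eapply is_derive_ext; [|apply (is_derive_ln_negmult_exp m a b
    (fun l => dotp p (f (x l)) beta) (fun l => dotp p (f (x l)) (unit_vec j)) y Ha Hb)].
  intros t. cbv beta. rewrite mixed_pmf_negmult by auto. f_equal.
  apply negmult_ext. intros l _. unfold poisson_mean. rewrite dotp_shift. reflexivity.
Qed.

Definition score_center (k p m : nat) (b : R) (f : Rk k -> nat -> R) (x : nat -> Rk k)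
    (beta : nat -> R) (i : nat) : R :=
  fsum m (fun r => poisson_mean k p f x beta r * f (x r) i)
  / (b + fsum m (poisson_mean k p f x beta)).

Lemma score_affine k p m a b f x beta i y : 0 < a -> 0 < b -> (i < p)%nat ->
  score k p m a b f x beta i y =
  fsum m (fun q => INR (nth q y 0%nat) * (f (x q) i - score_center k p m b f x beta i))
  - a * score_center k p m b f x beta i.
Proof.
  intros Ha Hb Hi. unfold score.
  erewrite is_derive_unique; [|apply is_derive_ln_mixed_pmf; auto].
  rewrite fsum_centered. unfold score_center, ysum.
  rewrite (fsum_ext m (fun l => INR (nth l y 0%nat) * dotp p (f (x l)) (unit_vec i))
                      (fun l => INR (nth l y 0%nat) * f (x l) i)),
    (fsum_ext m (fun l => dotp p (f (x l)) (unit_vec i) * poisson_mean k p f x beta l)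
                (fun r => poisson_mean k p f x beta r * f (x r) i))
    by (intros; rewrite dotp_unit_vec by auto; ring).
  ring.
Qed.

Lemma I_Po_col0 k p m f x beta i : (forall z : Rk k, f z 0%nat = 1) ->
  I_Po k p m f x beta i 0 = fsum m (fun r => poisson_mean k p f x beta r * f (x r) i).
Proof. intros Hf0. apply fsum_ext. intros. rewrite Hf0. unfold poisson_mean. ring. Qed.

Lemma I_Po_sym k p m f x beta i l : I_Po k p m f x beta i l = I_Po k p m f x beta l i.
Proof. apply fsum_ext. intros. ring. Qed.

Theorem theorem2 (k p m : nat) (a b : R) (f : Rk k -> nat -> R)
    (x : nat -> Rk k) (beta : nat -> R) :
  (0 < p)%nat -> 0 < a -> 0 < b ->
  (forall z : Rk k, f z 0%nat = 1) ->
  forall i l : nat, (i < p)%nat -> (l < p)%nat ->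
    (forall (j : nat) (y : list nat), length y = m ->
       ex_derive (fun t => ln (mixed_pmf k p m a b f x (shift j t beta) y)) 0) /\
    is_msum m
      (fun y => mixed_pmf k p m a b f x beta y
                * score k p m a b f x beta i y * score k p m a b f x beta l y)
      (a / b * (I_Po k p m f x beta i l
                - I_Po k p m f x beta i 0 * I_Po k p m f x beta 0 l
                  / (I_Po k p m f x beta 0 0 + b))).
Proof.
  intros _ Ha Hb Hf0 i l Hi Hl. split.
  { intros j y _. eexists. apply is_derive_ln_mixed_pmf; auto. }
  set (mu := poisson_mean k p f x beta).
  set (ci := score_center k p m b f x beta i). set (cl := score_center k p m b f x beta l).
  apply (is_msum_ext _ (fun y => negmult m a b mu y
      * (fsum m (fun q => INR (nth q y 0%nat) * (f (x q) i - ci)) + - (a * ci))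
      * (fsum m (fun q => INR (nth q y 0%nat) * (f (x q) l - cl)) + - (a * cl)))).
  { intros y. rewrite mixed_pmf_negmult, !score_affine by auto. reflexivity. }
  eapply is_msum_val_eq; [apply is_msum_negmult_affine_product; auto; intros; apply exp_pos|].
  change (I_Po k p m f x beta i l) with (fsum m (fun q => mu q * f (x q) i * f (x q) l)).
  replace (I_Po k p m f x beta 0 0) with (fsum m mu)
    by (rewrite I_Po_col0 by auto; apply fsum_ext; intros; rewrite Hf0; unfold mu; ring).
  rewrite (I_Po_sym _ _ _ _ _ _ 0 l), !I_Po_col0 by auto. fold mu.
  rewrite fsum_centered2, !fsum_centered. unfold ci, cl, score_center. fold mu.
  assert (HM : 0 <= fsum m mu) by (apply fsum_nonneg; intros; left; apply exp_pos).
  field. lra.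
Qed.
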